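(* Let $G$ be a countable discrete group and $\sigma: G\curvearrowright(X,\nu)$ a p.m.p. action on a standard probability space. For every natural number $n$ the map $\Psi_n: H^n(G,\mathbb{T})\to H^n(G\curvearrowright X;\mathbb{T})$, $\Psi_n([c])=[c']$ with $c'(g_1,\dots,g_n,x)=c(g_1,\dots,g_n)$, is a well-defined group homomorphism. Moreover: (i) if $\sigma$ is weakly mixing then $\Psi_1$ is injective; (ii) if the diagonal action $\sigma^2:G\curvearrowright(X^2,\nu^2)$ is weakly mixing and $\mathbb{T}$-cocycle superrigid, then $\Psi_2$ is injective.
   Context: $\mathbb{T}$ is the unit circle with trivial $G$-action; $H^n(G,\mathbb{T})$ is group cohomology via inhomogeneous cochains. For a p.m.p. action, a measurable $c:G^n\times X\to\mathbb{T}$ is an $n$-cocycle if for all $g_1,\dots,g_{n+1}$ and a.e. $x$: $c(g_2,\dots,g_{n+1},g_1^{-1}x)\prod_{i=1}^n c(g_1,\dots,g_ig_{i+1},\dots,g_{n+1},x)^{(-1)^i}\cdot c(g_1,\dots,g_n,x)^{(-1)^{n+1}}=1$; $c_1,c_2$ are cohomologous if for some measurable $b:G^{n-1}\times X\to\mathbb{T}$, for all $g_i$ and a.e. $x$, $c_1(g_1,\dots,g_n,x)\,b(g_2,\dots,g_n,g_1^{-1}x)\prod_{i=1}^{n-1}b(g_1,\dots,g_ig_{i+1},\dots,g_n,x)^{(-1)^i}\cdot b(g_1,\dots,g_{n-1},x)^{(-1)^n}=c_2(g_1,\dots,g_n,x)$; $H^n(G\curvearrowright X;\mathbb{T})$ is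 cocycles modulo those cohomologous to $1$. Weakly mixing: the diagonal action on the product of two copies is ergodic. A free ergodic p.m.p. action $G\curvearrowright(Y,\eta)$ is $\mathbb{T}$-cocycle superrigid if every measurable $c:G\times Y\to\mathbb{T}$ with $c(gh,y)=c(g,y)c(h,g^{-1}y)$ a.e. is of the form $c(g,y)=\lambda(g)b(y)b(g^{-1}y)^{-1}$ a.e. for some homomorphism $\lambda:G\to\mathbb{T}$ and measurable $b:Y\to\mathbb{T}$. *)

From HB Require Import structures.
From mathcomp Require Import all_boot all_order all_algebra.
From mathcomp Require Import complex.
From mathcomp Require Import all_classical all_reals all_analysis.
Set Implicit Arguments. Unset Strict Implicit. Unset Printing Implicit Defensive.
Import Order.TTheory GRing.Theory Num.Theory.
Local Open Scope classical_set_scope.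
Local Open Scope ring_scope.

(* The unit circle T is {z : R[i] | |z| = 1}, with the group structure given  *)
(* by complex multiplication and the Borel structure of the subspace of R^2.  *)
Definition circle (R : realType) (z : R[i]) : Prop := `|z| = 1.

Definition measurable_T d (Y : measurableType d) (R : realType)
    (f : Y -> R[i]) : Prop :=
  (forall y, circle (f y)) /\
  measurable_fun setT (fun y => complex.Re (f y)) /\
  measurable_fun setT (fun y => complex.Im (f y)).

(* Standard Borel space: Borel-isomorphic to a Borel subset of the reals      *)
(* (Kuratowski: equivalent to being the Borel space of a Polish topology).    *)
Definition standard_borel d (X : measurableType d) (R : realType) : Prop :=
  exists f : X -> R,
    [/\ measurable_fun setT f, injective f, measurable (range f)
      & forall A : set X, measurable A -> measurable (f @` A)].

Definition mp_action (G : groupType) d (Y : measurableType d) (R : realType)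
    (m : set Y -> \bar R) (act : G -> Y -> Y) : Prop :=
  [/\ forall y, act 1%g y = y,
      forall g h y, act (g * h)%g y = act g (act h y),
      forall g, measurable_fun setT (act g)
    & forall g (A : set Y), measurable A -> m (act g @^-1` A) = m A].

Definition ergodic (G : groupType) d (Y : measurableType d) (R : realType)
    (m : set Y -> \bar R) (act : G -> Y -> Y) : Prop :=
  forall A : set Y, measurable A -> (forall g, act g @^-1` A = A) ->
    m A = 0%E \/ m A = 1%E.

Definition diag_action (G : groupType) (Y : Type) (act : G -> Y -> Y) :
    G -> Y * Y -> Y * Y :=
  fun g p => (act g p.1, act g p.2).

Definition weakly_mixing (G : groupType) d (Y : measurableType d)
    (R : realType) (m : set Y -> \bar R) (act : G -> Y -> Y) : Prop :=
  ergodic (m \x m)%E (diag_action act).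

Definition free_action (G : groupType) d (Y : measurableType d)
    (R : realType) (m : set Y -> \bar R) (act : G -> Y -> Y) : Prop :=
  forall g : G, g != 1%g -> {ae m, forall y, act g y <> y}.

Definition Tcocycle_superrigid (G : groupType) d (Y : measurableType d)
    (R : realType) (m : set Y -> \bar R) (act : G -> Y -> Y) : Prop :=
  [/\ free_action m act, ergodic m act &
  forall c : G -> Y -> R[i],
    (forall g, measurable_T (c g)) ->
    (forall g h, {ae m, forall y, c (g * h)%g y = c g y * c h (act g^-1%g y)}) ->
    exists lam : G -> R[i],
      [/\ forall g, circle (lam g),
          forall g h, lam (g * h)%g = lam g * lam h &
          exists b : Y -> R[i], measurable_T b /\
            forall g, {ae m, forall y,
              c g y = lam g * b y * (b (act g^-1%g y))^-1}]].

(* Inhomogeneous cochains: an n-cochain is a function on lists of length n.  *)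
(* mulface i [g1; ..; gk] = [g1; ..; g(i+1) g(i+2); ..; gk]                  *)
Fixpoint mulface (G : groupType) (i : nat) (s : seq G) : seq G :=
  match s with
  | x :: ((y :: t) as t') =>
      if i is j.+1 then x :: mulface j t' else (x * y)%g :: t
  | _ => s
  end.

(* Coboundary (trivial action) of the n-cochain c, evaluated at g in G^(n+1): *)
(* c(g2..g(n+1)) prod_{i=1}^n c(g1,..,gi g(i+1),..)^(-1)^i c(g1..gn)^(-1)^(n+1) *)
Definition coboundary (G : groupType) (R : realType) (n : nat)
    (c : seq G -> R[i]) (g : seq G) : R[i] :=
  c (behead g) * (\prod_(1 <= i < n.+1) c (mulface i.-1 g) ^ ((-1) ^+ i : int))
  * c (take n g) ^ ((-1) ^+ n.+1 : int).

Definition group_cochain (G : groupType) (R : realType) (n : nat)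
    (c : seq G -> R[i]) : Prop :=
  forall g, size g = n -> circle (c g).

Definition group_cocycle (G : groupType) (R : realType) (n : nat)
    (c : seq G -> R[i]) : Prop :=
  group_cochain n c /\ forall g, size g = n.+1 -> coboundary n c g = 1.

Definition group_cohomologous (G : groupType) (R : realType) (n : nat)
    (c1 c2 : seq G -> R[i]) : Prop :=
  match n with
  | 0 => c1 [::] = c2 [::]
  | k.+1 => exists b : seq G -> R[i], group_cochain k b /\
      forall g, size g = k.+1 -> c1 g * coboundary k b g = c2 g
  end.

(* Coboundary for the action; g1^{-1} x acts in the first term. *)
Definition act_coboundary (G : groupType) d (X : measurableType d)
    (R : realType) (act : G -> X -> X) (n : nat)
    (c : seq G -> X -> R[i]) (g : seq G) (x : X) : R[i] :=
  c (behead g) (act (head 1%g g)^-1%g x)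
  * (\prod_(1 <= i < n.+1) c (mulface i.-1 g) x ^ ((-1) ^+ i : int))
  * c (take n g) x ^ ((-1) ^+ n.+1 : int).

(* measurable n-cochains G^n x X -> T (G countable discrete: measurability  *)
(* amounts to measurability of every section x |-> c(g1..gn, x)).           *)
Definition act_cochain (G : groupType) d (X : measurableType d)
    (R : realType) (n : nat) (c : seq G -> X -> R[i]) : Prop :=
  forall g, size g = n -> measurable_T (c g).

Definition act_cocycle (G : groupType) d (X : measurableType d)
    (R : realType) (mu : set X -> \bar R) (act : G -> X -> X) (n : nat)
    (c : seq G -> X -> R[i]) : Prop :=
  act_cochain n c /\
  forall g, size g = n.+1 -> {ae mu, forall x, act_coboundary act n c g x = 1}.

(* c1 and c2 are cohomologous in H^n(G ~ X; T); cochains are taken up to     *)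
(* null sets (which for n >= 1 is automatic, taking b = 1).                 *)
Definition act_cohomologous (G : groupType) d (X : measurableType d)
    (R : realType) (mu : set X -> \bar R) (act : G -> X -> X) (n : nat)
    (c1 c2 : seq G -> X -> R[i]) : Prop :=
  match n with
  | 0 => {ae mu, forall x, c1 [::] x = c2 [::] x}
  | k.+1 => exists b : seq G -> X -> R[i], act_cochain k b /\
      forall g, size g = k.+1 ->
        {ae mu, forall x, c1 g x * act_coboundary act k b g x = c2 g x}
  end.

Definition Psi (G : groupType) (X : Type) (R : realType)
    (c : seq G -> R[i]) : seq G -> X -> R[i] := fun g _ => c g.
Arguments Psi {G} X {R} c _ _.

From HB Require Import structures.
From mathcomp Require Import all_boot all_order all_algebra.
From mathcomp Require Import complex.
From mathcomp Require Import all_classical all_reals all_analysis.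
From mathcomp Require Import measurable_realfun ring lra.
Import Order.TTheory GRing.Theory Num.Theory.
Local Open Scope classical_set_scope.
Local Open Scope ring_scope.

(* Psi_n sends a cochain to the corresponding constant function of x, so it
   commutes with coboundaries and with products.

   Psi_1 is injective: if c1(g) b(g^-1 x) / b(x) = c2(g), then b is an
   eigenfunction of the action, so b(x) / b(y) is invariant under the diagonal
   action on X^2; by weak mixing it is a.e. constant, hence so is b, and c1 = c2.

   Psi_2 is injective: if c1 * db = c2 with b : G x X -> T, then db does not
   depend on x, so c(g, (x, y)) = b(g, x) / b(g, y) is a T-cocycle of the
   diagonal action on X^2. Superrigidity gives c(g, p) = lam(g) B(p) / B(g^-1 p),
   so B(g p) / B(p) is of product form lam'(g) f_g(x) h_g(y). Such a factor
   cancels in the cross ratio B(x, y) B(x', y') / (B(x, y') B(x', y)), which is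
   thus invariant under the diagonal action on X^4, hence a.e. constant by weak
   mixing of the action on X^2; therefore B(x, y) = c phi(x) psi(y). Separating
   the variables in b(g, x) / b(g, y) = lam(g) B(x, y) / B(g^-1 x, g^-1 y) gives
   b(g, x) = beta(g) phi(x) / phi(g^-1 x), and then c1 * d(beta) = c2. *)

Section circle.
Context {R : realType}.
Implicit Types z w : R[i].

Lemma ReM z w :
  complex.Re (z * w) = complex.Re z * complex.Re w - complex.Im z * complex.Im w.
Proof. by case: z => a b; case: w. Qed.

Lemma ImM z w :
  complex.Im (z * w) = complex.Re z * complex.Im w + complex.Im z * complex.Re w.
Proof. by case: z => a b; case: w => c e /=; rewrite addrC. Qed.

Lemma circle_Re2_Im2 {z} : circle z -> complex.Re z ^+ 2 + complex.Im z ^+ 2 = 1.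
Proof.
move=> z1; have := add_Re2_Im2 z; rewrite z1 expr1n.
by move=> /(congr1 (@complex.Re R)).
Qed.

Lemma circle_ReV {z} : circle z -> complex.Re z^-1 = complex.Re z.
Proof. by move/circle_Re2_Im2; case: z => a b /= ->; rewrite divr1. Qed.

Lemma circle_ImV {z} : circle z -> complex.Im z^-1 = - complex.Im z.
Proof. by move/circle_Re2_Im2; case: z => a b /= ->; rewrite divr1. Qed.

Lemma circle_Re_bound {z} : circle z -> -1 <= complex.Re z <= 1.
Proof.
move/circle_Re2_Im2; move: (complex.Re z) (complex.Im z) => a b ab1.
by apply/andP; split; nra.
Qed.

Lemma circle_Im_bound {z} : circle z -> -1 <= complex.Im z <= 1.
Proof.
move/circle_Re2_Im2; move: (complex.Re z) (complex.Im z) => a b ab1.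
by apply/andP; split; nra.
Qed.

Lemma circle_neq0 {z} : circle z -> z != 0.
Proof.
by rewrite /circle => z1; apply: contra_eq_neq z1 => ->; rewrite normr0 eq_sym oner_neq0.
Qed.

Lemma circle1 : circle (1 : R[i]).
Proof. exact: normr1. Qed.

Lemma circleM {z w} : circle z -> circle w -> circle (z * w).
Proof. by rewrite /circle normrM => -> ->; rewrite mulr1. Qed.

Lemma circleV {z} : circle z -> circle z^-1.
Proof. by rewrite /circle normfV => ->; rewrite invr1. Qed.

End circle.

Section measurable_T.
Context {R : realType} {d : measure_display} {Y : measurableType d}.
Implicit Types f h : Y -> R[i].

Lemma measurable_T_cst (z : R[i]) : circle z -> measurable_T (fun _ : Y => z).
Proof. by move=> z1; split=> //; split; exact: measurable_cst. Qed.

Lemma measurable_TM f h :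
  measurable_T f -> measurable_T h -> measurable_T (fun y => f y * h y).
Proof.
move=> [f1 [mRf mIf]] [h1 [mRh mIh]]; split=> [y|]; first exact: circleM.
split.
- under eq_fun do rewrite ReM.
  by apply: measurable_funB; apply: measurable_funM.
- under eq_fun do rewrite ImM.
  by apply: measurable_funD; apply: measurable_funM.
Qed.

Lemma measurable_TV f : measurable_T f -> measurable_T (fun y => (f y)^-1).
Proof.
move=> [f1 [mRf mIf]]; split=> [y|]; first exact: circleV.
split; first by under eq_fun do rewrite circle_ReV //.
by under eq_fun do rewrite circle_ImV //; exact: measurable_funN.
Qed.

Lemma measurable_T_comp d' (Z : measurableType d') (t : Z -> Y) f :
  measurable_fun setT t -> measurable_T f -> measurable_T (f \o t).
Proof.
move=> mt [f1 [mRf mIf]]; split=> [z|]; first exact: f1.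
by split; [exact: measurableT_comp mRf mt|exact: measurableT_comp mIf mt].
Qed.

End measurable_T.

Definition measure_preserving {d1 d2} {T1 : measurableType d1}
    {T2 : measurableType d2} {R : realType} (m1 : set T1 -> \bar R)
    (m2 : set T2 -> \bar R) (f : T1 -> T2) : Prop :=
  measurable_fun setT f /\ forall A, measurable A -> (m1 (f @^-1` A) = m2 A)%E.

Section measure_preserving.
Context {R : realType}.
Local Open Scope ereal_scope.

Lemma ae_measure_preserving {d1 d2} {T1 : measurableType d1}
    {T2 : measurableType d2} {m1 : set T1 -> \bar R} {m2 : set T2 -> \bar R}
    {f : T1 -> T2} {P : T2 -> Prop} :
  measure_preserving m1 m2 f -> {ae m2, forall y, P y} ->
  {ae m1, forall x, P (f x)}.
Proof.
move=> [mf pf] [N [mN N0 sub]]; exists (f @^-1` N); split.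
- by rewrite -[X in measurable X]setTI; apply: mf.
- by rewrite pf.
- by move=> x /= nP; apply: sub.
Qed.

Lemma measure_preserving_comp {d1 d2 d3} {T1 : measurableType d1}
    {T2 : measurableType d2} {T3 : measurableType d3} {m1 : set T1 -> \bar R}
    {m2 : set T2 -> \bar R} {m3 : set T3 -> \bar R} {f : T1 -> T2} {g : T2 -> T3} :
  measure_preserving m1 m2 f -> measure_preserving m2 m3 g ->
  measure_preserving m1 m3 (g \o f).
Proof.
move=> [mf pf] [mg pg]; split; first exact: measurableT_comp.
move=> A mA; rewrite comp_preimage pf ?pg //.
by rewrite -[X in measurable X]setTI; apply: mg.
Qed.

Lemma measure_preserving_prod {d d1 d2} {T : measurableType d}
    {T1 : measurableType d1} {T2 : measurableType d2}
    {m : {measure set T -> \bar R}} {m1 : {sigma_finite_measure set T1 -> \bar R}}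
    {m2 : {sigma_finite_measure set T2 -> \bar R}} {f : T -> T1 * T2} :
  measurable_fun setT f ->
  (forall A B, measurable A -> measurable B ->
     m (f @^-1` (A `*` B)) = m1 A * m2 B)%E ->
  measure_preserving m (m1 \x m2) f.
Proof.
move=> mf mfX; split=> // N mN.
by symmetry; exact: (@product_measure_unique _ _ _ _ R m1 m2 (pushforward m f)).
Qed.

Lemma measure_preserving_swap {d} {T : measurableType d} (m : probability T R) :
  measure_preserving (m \x m) (m \x m) (fun p => (p.2, p.1)).
Proof.
apply: measure_preserving_prod => [|A B mA mB].
  by apply/measurable_fun_pairP; split; [exact: measurable_snd|exact: measurable_fst].
rewrite (_ : _ @^-1` _ = B `*` A); last by apply/seteqP; split=> -[x y] [].
by rewrite [LHS]product_measure1E // muleC.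
Qed.

Section product_of_probabilities.
Context {d1 d2 : measure_display} {T1 : measurableType d1} {T2 : measurableType d2}.
Variables (m1 : probability T1 R) (m2 : probability T2 R).

Lemma measure_preserving_fst : measure_preserving (m1 \x m2) m1 fst.
Proof.
split=> [|A mA]; first exact: measurable_fst.
rewrite -setXT product_measure1E // (_ : _ setT = 1) ?mule1 //.
exact: probability_setT.
Qed.

Lemma measure_preserving_snd : measure_preserving (m1 \x m2) m2 snd.
Proof.
split=> [|A mA]; first exact: measurable_snd.
rewrite -setTX product_measure1E // (_ : _ setT = 1) ?mul1e //.
exact: probability_setT.
Qed.

End product_of_probabilities.

Lemma measure_preserving_pair {d d' d1 d2} {T : measurableType d}
    {T' : measurableType d'} {T1 : measurableType d1} {T2 : measurableType d2}
    {m : probability T R} {m' : probability T' R} {m1 : probability T1 R}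
    {m2 : probability T2 R} {f1 : T -> T1} {f2 : T' -> T2} :
  measure_preserving m m1 f1 -> measure_preserving m' m2 f2 ->
  measure_preserving (m \x m') (m1 \x m2) (fun p => (f1 p.1, f2 p.2)).
Proof.
move=> [mf1 pf1] [mf2 pf2]; apply: measure_preserving_prod => [|A B mA mB].
  apply/measurable_fun_pairP; split.
  - exact: measurableT_comp mf1 measurable_fst.
  - exact: measurableT_comp mf2 measurable_snd.
have mA1 : measurable (f1 @^-1` A) by rewrite -[X in measurable X]setTI; apply: mf1.
have mB2 : measurable (f2 @^-1` B) by rewrite -[X in measurable X]setTI; apply: mf2.
rewrite (_ : _ @^-1` _ = f1 @^-1` A `*` f2 @^-1` B) //.
by rewrite [LHS]product_measure1E //; congr (_ * _); [exact: pf1|exact: pf2].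
Qed.

Section cross_projections.
Context {d1 d2 : measure_display} {T1 : measurableType d1} {T2 : measurableType d2}.
Variables (m1 : probability T1 R) (m2 : probability T2 R).
Local Notation m12 := (m1 \x m2).

Lemma measure_preserving_fst_snd :
  measure_preserving (m12 \x m12) m12 (fun pq => (pq.1.1, pq.2.2)).
Proof.
exact: measure_preserving_pair (measure_preserving_fst _ _) (measure_preserving_snd _ _).
Qed.

Lemma measure_preserving_snd_fst :
  measure_preserving (m12 \x m12) m12 (fun pq => (pq.2.1, pq.1.2)).
Proof.
exact: measure_preserving_comp (measure_preserving_swap m12) measure_preserving_fst_snd.
Qed.

End cross_projections.

End measure_preserving.

Section probability_ae.
Context {R : realType} {d : measure_display} {T : measurableType d}.
Variable m : probability T R.

Lemma ae_exists (P : T -> Prop) : {ae m, forall x, P x} -> exists x, P x.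
Proof.
move=> [N [mN N0 subN]]; apply: contrapT => noP.
have NT : N = setT.
  by apply/seteqP; split=> // x _; apply: subN => Px; apply: noP; exists x.
by move: N0; rewrite NT probability_setT => /eqP; rewrite onee_eq0.
Qed.

Lemma ae_forall_countable (I : Type) (P : I -> T -> Prop) :
  countable [set: I] ->
  (forall i, {ae m, forall x, P i x}) -> {ae m, forall x, forall i, P i x}.
Proof.
move=> /countable_injP [f finj] aeP.
suff : {ae m, forall x, forall n, forall i, f i = n -> P i x}.
  by apply: filterS => x Px i; exact: (Px (f i) i erefl).
apply: ae_foralln => n; have [[i fi]|nofi] := pselect (exists i, f i = n).
  apply: filterS (aeP i) => x Pix j fj.
  by rewrite (finj j i) ?inE // fi fj.
by apply: aeW => x i fi; exfalso; apply: nofi; exists i.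
Qed.

Lemma ae_filterS4 (P1 P2 P3 P4 Q : T -> Prop) :
  (forall x, P1 x -> P2 x -> P3 x -> P4 x -> Q x) ->
  {ae m, forall x, P1 x} -> {ae m, forall x, P2 x} ->
  {ae m, forall x, P3 x} -> {ae m, forall x, P4 x} -> {ae m, forall x, Q x}.
Proof.
move=> PQ e1 e2 e3 e4; apply: filterS2 (filterI e1 e2) (filterI e3 e4).
by move=> x [? ?] [? ?]; exact: PQ.
Qed.

End probability_ae.
Arguments ae_exists {R d T m P}.
Arguments ae_filterS4 {R d T m P1 P2 P3 P4 Q}.
Arguments ae_forall_countable {R d T m I P}.

Section product_ae.
Context {R : realType} {d1 d2 : measure_display}.
Context {T1 : measurableType d1} {T2 : measurableType d2}.
Variables (m1 : probability T1 R) (m2 : probability T2 R).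
Local Open Scope ereal_scope.

Lemma ae_prod_sections (P : T1 * T2 -> Prop) :
  {ae m1 \x m2, forall p, P p} ->
  {ae m1, forall x, {ae m2, forall y, P (x, y)}}.
Proof.
move=> [N [mN N0 subN]].
have mN1 : measurable_fun setT (fun x => m2 (xsection N x)).
  exact: measurable_fun_xsection.
have N1 : \int[m1]_x `|m2 (xsection N x)| = 0.
  rewrite -[RHS]N0; apply: eq_integral => x _.
  by rewrite gee0_abs //; apply: measure_ge0; exact: measurable_xsection.
apply: filterS ((ae_eq_integral_abs m1 measurableT mN1).1 N1) => x /(_ I) Nx.
exists (xsection N x); split => //; first exact: measurable_xsection.
by move=> y /= nPxy; rewrite /xsection /= inE; exact: subN.
Qed.

Lemma ae_prod_section (P : T1 * T2 -> Prop) :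
  {ae m1 \x m2, forall p, P p} -> exists x, {ae m2, forall y, P (x, y)}.
Proof. by move/ae_prod_sections/ae_exists. Qed.

Lemma ae_separated_const (U : Type) (u : T1 -> U) (v : T2 -> U) :
  {ae m1 \x m2, forall p, u p.1 = v p.2} -> exists k, {ae m1, forall x, u x = k}.
Proof.
move=> /ae_prod_sections uv; have [x0 uv0] := ae_exists uv.
exists (u x0); apply: filterS uv => x uvx.
by have [y [-> <-]] := ae_exists (filterI uvx uv0).
Qed.

End product_ae.
Arguments ae_prod_sections {R d1 d2 T1 T2 m1 m2 P}.
Arguments ae_prod_section {R d1 d2 T1 T2 m1 m2 P}.
Arguments ae_separated_const {R d1 d2 T1 T2 m1 m2 U u v}.

Lemma sublevel_01_ae_const {R : realType} {d : measure_display}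
    {T : measurableType d} {m : probability T R} {f : T -> R} {a b : R} :
  measurable_fun setT f -> (forall x, a <= f x <= b) ->
  (forall t, m [set x | f x < t] = 0%E \/ m [set x | f x < t] = 1%E) ->
  exists t, {ae m, forall x, f x = t}.
Proof.
move=> mf fab f01; pose S := [set t | m [set x | f x < t] = 0%E].
have mlt t : measurable [set x | f x < t].
  rewrite (_ : [set x | _] = setT `&` f @^-1` `]-oo, t[); first exact: mf.
  by apply/seteqP; split=> x /=; rewrite in_itv /= ?andbT; [move=> ->|case].
have Sa : S a.
  rewrite /S /= (_ : [set x | f x < a] = set0) ?measure0 //.
  by apply/seteqP; split=> // x /=; rewrite ltNge; case/andP: (fab x) => ->.
have Sb t : S t -> t <= b.
  rewrite leNgt => St; apply/negP => bt; move: St; rewrite /S /=.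
  rewrite (_ : [set x | f x < t] = setT) ?probability_setT.
    by move/eqP; rewrite onee_eq0.
  by apply/seteqP; split=> // x _ /=; case/andP: (fab x) => _ /le_lt_trans; apply.
have supS : has_sup S by split; [exists a | exists b => t /Sb].
have inv_gt0 n : 0 < n.+1%:R^-1 :> R by rewrite invr_gt0.
(* sup S is the essential infimum of f. *)
exists (sup S).
have below : m.-negligible [set x | f x < sup S].
  apply: (@negligibleS _ _ _ m (\bigcup_n [set x | f x < sup S - n.+1%:R^-1])).
    by move=> x /= fx; have [n ?] := ltr_add_invr fx; exists n => //=; rewrite ltrBrDr.
  apply: negligible_bigcup => n.
  have [t St ltt] := sup_adherent (inv_gt0 n) supS.
  by exists [set x | f x < t]; split=> // x /= /lt_trans; apply.
have above : m.-negligible [set x | sup S < f x].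
  apply: (@negligibleS _ _ _ m (\bigcup_n ~` [set x | f x < sup S + n.+1%:R^-1])).
    by move=> x /= fx; have [n ?] := ltr_add_invr fx; exists n => //=; rewrite ltNge ltW.
  apply: negligible_bigcup => n; exists (~` [set x | f x < sup S + n.+1%:R^-1]).
  split=> //; first exact: measurableC.
  have [S0|S1] := f01 (sup S + n.+1%:R^-1).
    by have := sup_upper_bound supS S0; rewrite gerDl leNgt inv_gt0.
  have compl0 A : measurable A -> m A = 1%E -> m (~` A) = 0%E.
    by move=> mA mA1; rewrite probability_setC // mA1 subee.
  exact: compl0.
apply: negligibleS (negligibleU below above) => x /= fxS.
by case: ltgtP fxS => // ? _; [left|right].
Qed.

Section ergodic.
Context {G : groupType} (countG : countable [set: G]) {R : realType}.
Context {d : measure_display} {Y : measurableType d}.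
Variables (m : probability Y R) (act : G -> Y -> Y).
Hypotheses (pmp : mp_action m act) (erg : ergodic m act).

Lemma ergodic_ae_invariant_set (A : set Y) : measurable A ->
  (forall g, {ae m, forall y, A y -> A (act g y)}) -> m A = 0%E \/ m A = 1%E.
Proof.
move=> mA Ainv; have [act1 actM mact _] := pmp.
pose Ainf := [set y | forall g, A (act g y)].
have mAinf : measurable Ainf.
  rewrite (_ : Ainf = ~` \bigcup_g ~` (act g @^-1` A)).
    apply/measurableC/countable_bigcupT_measurable => // g.
    by apply: measurableC; rewrite -[X in measurable X]setTI; apply: mact.
  apply/seteqP; split=> [y Ay [g _ /=]|y /= nAy g]; first exact.
  by apply: contrapT => nAgy; apply: nAy; exists g.
have AinfA : Ainf `<=` A by move=> y /(_ 1%g); rewrite act1.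
have invAinf g : act g @^-1` Ainf = Ainf.
  apply/seteqP; split=> y Ay h /=; last by rewrite -actM.
  by have := Ay (h * g^-1)%g; rewrite -actM -mulgA mulVg mulg1.
have nAinf : m.-negligible (A `\` Ainf).
  have [N [mN N0 subN]] := ae_forall_countable countG Ainv.
  exists N; split=> // y [Ay nAy]; apply: subN => /= Ay'.
  by apply: nAy => g; exact: Ay'.
have -> : m A = m Ainf.
  have mD := measurableD mA mAinf.
  rewrite -(setDUK AinfA) measureU //; last by rewrite setDIK.
  by rewrite (measure_negligible mD nAinf) adde0.
exact: erg.
Qed.

Lemma ergodic_ae_invariant_real {f : Y -> R} {a b : R} :
  measurable_fun setT f -> (forall y, a <= f y <= b) ->
  (forall g, {ae m, forall y, f (act g y) = f y}) ->
  exists t, {ae m, forall y, f y = t}.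
Proof.
move=> mf fab finv; apply: (sublevel_01_ae_const mf fab) => t.
have mlt : measurable [set y | f y < t].
  rewrite (_ : [set y | _] = setT `&` f @^-1` `]-oo, t[); first exact: mf.
  by apply/seteqP; split=> y /=; rewrite in_itv /= ?andbT; [move=> ->|case].
by apply: ergodic_ae_invariant_set => // g; apply: filterS (finv g) => y /= ->.
Qed.

Lemma ergodic_ae_invariant_T {F : Y -> R[i]} : measurable_T F ->
  (forall g, {ae m, forall y, F (act g y) = F y}) ->
  exists k, {ae m, forall y, F y = k}.
Proof.
move=> [F1 [mRF mIF]] Finv.
have [a Fa] : exists a, {ae m, forall y, complex.Re (F y) = a}.
  apply: ergodic_ae_invariant_real mRF (fun y => circle_Re_bound (F1 y)) _ => g.
  by apply: filterS (Finv g) => y ->.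
have [b Fb] : exists b, {ae m, forall y, complex.Im (F y) = b}.
  apply: ergodic_ae_invariant_real mIF (fun y => circle_Im_bound (F1 y)) _ => g.
  by apply: filterS (Finv g) => y ->.
exists (Complex a b); apply: filterS2 Fa Fb => y Ray Iby.
by apply/eqP; rewrite eq_complex Ray Iby !eqxx.
Qed.

End ergodic.
Arguments ergodic_ae_invariant_T {G} countG {R d Y m act} pmp erg {F}.

Section diagonal_action.
Context {G : groupType} {R : realType} {d : measure_display} {X : measurableType d}.
Variables (m : probability X R) (act : G -> X -> X).
Hypothesis pmp : mp_action m act.

Lemma mp_action_measure_preserving g : measure_preserving m m (act g).
Proof. by case: pmp => _ _ mact pact; split; [exact: mact|exact: pact]. Qed.

Lemma mp_action_diag : mp_action (m \x m)%E (diag_action act).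
Proof.
have [act1 actM _ _] := pmp.
have mpg g : measure_preserving (m \x m)%E (m \x m)%E (diag_action act g).
  by apply: measure_preserving_pair; exact: mp_action_measure_preserving.
split=> [[x y]|g h [x y]|g|g]; rewrite /diag_action /=.
- by rewrite !act1.
- by rewrite !actM.
- exact: (mpg g).1.
- exact: (mpg g).2.
Qed.

Lemma weakly_mixing_eigenfunction_const (countG : countable [set: G])
    {b : X -> R[i]} {chi : G -> R[i]} :
  weakly_mixing m act -> measurable_T b -> (forall g, chi g != 0) ->
  (forall g, {ae m, forall x, b (act g x) = chi g * b x}) ->
  exists k, {ae m, forall x, b x = k}.
Proof.
move=> wm mb chi0 beig; have b0 x : b x != 0 by apply: circle_neq0; exact: mb.1.
pose F (p : X * X) := b p.1 / b p.2.
have mF : measurable_T F.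
  apply: measurable_TM; first exact: measurable_T_comp measurable_fst mb.
  by apply: measurable_TV; exact: measurable_T_comp measurable_snd mb.
have Finv g : {ae (m \x m)%E, forall p, F (diag_action act g p) = F p}.
  have e1 := ae_measure_preserving (measure_preserving_fst m m) (beig g).
  have e2 := ae_measure_preserving (measure_preserving_snd m m) (beig g).
  by apply: filterS2 e1 e2 => p e1p e2p; rewrite /F /= e1p e2p; field; rewrite chi0 !b0.
have [k Fk] := ergodic_ae_invariant_T countG mp_action_diag wm mF Finv.
apply: (ae_separated_const (v := fun y => k * b y)).
by apply: filterS Fk => p <-; rewrite /F; field; rewrite b0.
Qed.

End diagonal_action.
Arguments mp_action_measure_preserving {G R d X m act}.
Arguments mp_action_diag {G R d X m act}.
Arguments weakly_mixing_eigenfunction_const {G R d X m act} pmp countG {b chi}.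

Section coboundary_formulas.
Context {G : groupType} {R : realType}.

Lemma coboundary0 (b : seq G -> R[i]) a : coboundary 0 b [:: a] = b [::] / b [::].
Proof. by rewrite /coboundary /= big_geq // mulr1 expr1 exprN1. Qed.

Lemma coboundary1 (b : seq G -> R[i]) a c :
  coboundary 1 b [:: a; c] = b [:: c] / b [:: a * c]%g * b [:: a].
Proof. by rewrite /coboundary /= big_nat1 /= expr1 exprN1 expr2 mulN1r opprK. Qed.

Context {d : measure_display} {X : measurableType d} (act : G -> X -> X).

Lemma act_coboundary0 (b : seq G -> X -> R[i]) a x :
  act_coboundary act 0 b [:: a] x = b [::] (act a^-1%g x) / b [::] x.
Proof. by rewrite /act_coboundary /= big_geq // mulr1 expr1 exprN1. Qed.

Lemma act_coboundary1 (b : seq G -> X -> R[i]) a c x :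
  act_coboundary act 1 b [:: a; c] x =
    b [:: c] (act a^-1%g x) / b [:: a * c]%g x * b [:: a] x.
Proof. by rewrite /act_coboundary /= big_nat1 /= expr1 exprN1 expr2 mulN1r opprK. Qed.

Lemma act_coboundary_one n g x : act_coboundary act n (fun _ _ => 1 : R[i]) g x = 1.
Proof. by rewrite /act_coboundary big1 ?exp1rz ?mulr1 // => i _; rewrite exp1rz. Qed.

Lemma act_coboundary_Psi n (c : seq G -> R[i]) g x :
  act_coboundary act n (Psi X c) g x = coboundary n c g.
Proof. by []. Qed.

End coboundary_formulas.

Section Psi_homomorphism.
Context {G : groupType} {R : realType} {d : measure_display} {X : measurableType d}.
Variables (m : {measure set X -> \bar R}) (act : G -> X -> X).

Lemma act_cocycle_Psi n (c : seq G -> R[i]) :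
  group_cocycle n c -> act_cocycle m act n (Psi X c).
Proof.
move=> [cc dc]; split=> [g sg|g sg]; first exact/measurable_T_cst/cc.
by apply: aeW => x; rewrite act_coboundary_Psi dc.
Qed.

Lemma act_cohomologous_Psi n (c1 c2 : seq G -> R[i]) :
  group_cohomologous n c1 c2 -> act_cohomologous m act n (Psi X c1) (Psi X c2).
Proof.
case: n => [c12|n [b [cb c12]]]; first exact: aeW.
exists (Psi X b); split=> [g sg|g sg]; first exact/measurable_T_cst/cb.
by apply: aeW => x; rewrite act_coboundary_Psi c12.
Qed.

Lemma act_cohomologous_refl n (c : seq G -> X -> R[i]) :
  act_cohomologous m act n c c.
Proof.
case: n => [|n]; first exact: aeW.
exists (fun _ _ => 1); split=> [g _|g _]; first exact/measurable_T_cst/circle1.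
by apply: aeW => x; rewrite act_coboundary_one mulr1.
Qed.

End Psi_homomorphism.

Lemma Psi1_injective {G : groupType} (countG : countable [set: G]) {R : realType}
    {d : measure_display} {X : measurableType d} {nu : probability X R}
    {act : G -> X -> X} {c1 c2 : seq G -> R[i]} :
  mp_action nu act -> weakly_mixing nu act ->
  group_cochain 1 c1 -> group_cochain 1 c2 ->
  act_cohomologous nu act 1 (Psi X c1) (Psi X c2) -> group_cohomologous 1 c1 c2.
Proof.
move=> pmp wm cc1 cc2 [b [mb Hb]].
have mb0 : measurable_T (b [::]) := mb [::] erefl.
have b0_neq0 x : b [::] x != 0 by apply: circle_neq0; exact: mb0.1.
have c1_neq0 a : c1 [:: a] != 0 by apply: circle_neq0; exact: cc1.
have c2_neq0 a : c2 [:: a] != 0 by apply: circle_neq0; exact: cc2.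
have Hb1 a : {ae nu, forall x,
    c1 [:: a] * (b [::] (act a^-1%g x) / b [::] x) = c2 [:: a]}.
  by apply: filterS (Hb [:: a] erefl) => x; rewrite act_coboundary0.
have [k b0k] : exists k, {ae nu, forall x, b [::] x = k}.
  apply: (weakly_mixing_eigenfunction_const pmp countG
    (chi := fun g => c2 [:: g^-1%g] / c1 [:: g^-1%g])) => // [g|g].
    by rewrite mulf_neq0 ?invr_eq0.
  apply: filterS (Hb1 g^-1%g) => x; rewrite invgK => <-.
  by field; rewrite c1_neq0 b0_neq0.
exists (fun _ => 1); split=> [g _|]; first exact: circle1.
case=> [|a [|]] //= _; rewrite coboundary0 divr1 mulr1.
have b0k' := ae_measure_preserving (mp_action_measure_preserving pmp a^-1%g) b0k.
have [x [Hx [b0x b0ax]]] := ae_exists (filterI (Hb1 a) (filterI b0k b0k')).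
have k0 : k != 0 by rewrite -b0x.
by move: Hx; rewrite b0x b0ax divff // mulr1.
Qed.

Definition diag_ratio {G : groupType} {X : Type} {R : realType}
    (b : G -> X -> R[i]) (g : G) (p : X * X) : R[i] :=
  b g p.1 / b g p.2.

Definition cross_ratio {X : Type} {R : realType} (B : X * X -> R[i])
    (pq : (X * X) * (X * X)) : R[i] :=
  B pq.1 * B pq.2 / (B (pq.1.1, pq.2.2) * B (pq.2.1, pq.1.2)).

Section Psi2_injectivity.
Context {G : groupType} (countG : countable [set: G]) {R : realType}.
Context {d : measure_display} {X : measurableType d}.
Variables (nu : probability X R) (act : G -> X -> X).
Hypothesis pmp : mp_action nu act.
Local Notation nu2 := (nu \x nu)%E.

Lemma diag_ratio_cocycle {b : G -> X -> R[i]} {k : G -> G -> R[i]} :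
  (forall g x, b g x != 0) -> (forall g h, k g h != 0) ->
  (forall g h, {ae nu, forall x,
     b h (act g^-1%g x) / b (g * h)%g x * b g x = k g h}) ->
  forall g h, {ae nu2, forall p, diag_ratio b (g * h)%g p =
    diag_ratio b g p * diag_ratio b h (diag_action act g^-1%g p)}.
Proof.
move=> b0 k0 bk g h.
have e1 := ae_measure_preserving (measure_preserving_fst nu nu) (bk g h).
have e2 := ae_measure_preserving (measure_preserving_snd nu nu) (bk g h).
have bgh x : b h (act g^-1%g x) / b (g * h)%g x * b g x = k g h ->
    b (g * h)%g x = b h (act g^-1%g x) * b g x / k g h.
  by move=> <-; field; rewrite !b0.
apply: filterS2 e1 e2 => p /bgh e1p /bgh e2p; rewrite /diag_ratio /= e1p e2p.
by field; rewrite !b0 k0.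
Qed.

Lemma cross_ratio_invariant {B : X * X -> R[i]} {l : G -> R[i]}
    {f h : G -> X -> R[i]} :
  (forall p, B p != 0) -> (forall g, l g != 0) ->
  (forall g x, f g x != 0) -> (forall g x, h g x != 0) ->
  (forall g, {ae nu2, forall p,
     B (diag_action act g p) = l g * f g p.1 * h g p.2 * B p}) ->
  forall g, {ae (nu2 \x nu2)%E, forall pq,
    cross_ratio B (diag_action (diag_action act) g pq) = cross_ratio B pq}.
Proof.
move=> B0 l0 f0 h0 Bg g.
have e1 := ae_measure_preserving (measure_preserving_fst nu2 nu2) (Bg g).
have e2 := ae_measure_preserving (measure_preserving_snd nu2 nu2) (Bg g).
have e3 := ae_measure_preserving (measure_preserving_fst_snd nu nu) (Bg g).
have e4 := ae_measure_preserving (measure_preserving_snd_fst nu nu) (Bg g).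
apply: (ae_filterS4 _ e1 e2 e3 e4) => pq.
rewrite /cross_ratio /diag_action /= => -> -> -> ->.
by field; rewrite !B0 l0 !f0 !h0.
Qed.

Lemma cross_ratio_const_split {B : X * X -> R[i]} {k : R[i]} :
  measurable_T B -> {ae (nu2 \x nu2)%E, forall pq, cross_ratio B pq = k} ->
  exists c phi psi, [/\ circle c, measurable_T phi, measurable_T psi &
    {ae nu2, forall p, B p = c * phi p.1 * psi p.2}].
Proof.
move=> mB Bk; have B0 p : B p != 0 by apply: circle_neq0; exact: mB.1.
have [p0 Bp0] := ae_prod_section Bk; have [q0 Bq0] := ae_exists Bp0.
exists (k / B p0), (fun x => B (x, p0.2)), (fun y => B (p0.1, y)); split.
- by rewrite -Bq0; repeat (apply: circleM || apply: circleV || exact: mB.1).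
- exact: measurable_T_comp (pair2_measurable p0.2) mB.
- exact: measurable_T_comp (pair1_measurable p0.1) mB.
- apply: filterS Bp0 => q; rewrite /cross_ratio /= => <-.
  by field; rewrite !B0.
Qed.

Lemma weakly_mixing2_multiplier_split {B : X * X -> R[i]} {l : G -> R[i]}
    {f h : G -> X -> R[i]} :
  weakly_mixing nu2 (diag_action act) -> measurable_T B ->
  (forall g, l g != 0) -> (forall g x, f g x != 0) -> (forall g x, h g x != 0) ->
  (forall g, {ae nu2, forall p,
     B (diag_action act g p) = l g * f g p.1 * h g p.2 * B p}) ->
  exists c phi psi, [/\ circle c, measurable_T phi, measurable_T psi &
    {ae nu2, forall p, B p = c * phi p.1 * psi p.2}].
Proof.
move=> wm2 mB l0 f0 h0 Bg; have B0 p : B p != 0 by apply: circle_neq0; exact: mB.1.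
have mK : measurable_T (cross_ratio B).
  rewrite /cross_ratio; apply: measurable_TM; first apply: measurable_TM.
  - exact: measurable_T_comp (measure_preserving_fst nu2 nu2).1 mB.
  - exact: measurable_T_comp (measure_preserving_snd nu2 nu2).1 mB.
  apply: measurable_TV; apply: measurable_TM.
  - exact: measurable_T_comp (measure_preserving_fst_snd nu nu).1 mB.
  - exact: measurable_T_comp (measure_preserving_snd_fst nu nu).1 mB.
have [k Kk] := ergodic_ae_invariant_T countG (mp_action_diag (mp_action_diag pmp))
  wm2 mK (cross_ratio_invariant B0 l0 f0 h0 Bg).
exact: cross_ratio_const_split mB Kk.
Qed.

Lemma diag_ratio_split_coboundary {t : X -> X} {b phi psi : X -> R[i]}
    {B : X * X -> R[i]} {c l : R[i]} :
  measure_preserving nu nu t ->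
  (forall x, circle (b x)) -> (forall x, circle (phi x)) ->
  (forall y, psi y != 0) -> c != 0 -> l != 0 ->
  {ae nu2, forall p, B p = c * phi p.1 * psi p.2} ->
  {ae nu2, forall p, b p.1 / b p.2 = l * B p / B (t p.1, t p.2)} ->
  exists beta, circle beta /\ {ae nu, forall x, b x = beta * phi x / phi (t x)}.
Proof.
move=> mpt b1 phi1 psi0 c0 l0 Bsplit Bb.
have b0 x := circle_neq0 (b1 x); have phi0 x := circle_neq0 (phi1 x).
have Bsplit_t := ae_measure_preserving (measure_preserving_pair mpt mpt) Bsplit.
pose u x := b x * phi (t x) / phi x.
have [beta ube] : exists beta, {ae nu, forall x, u x = beta}.
  apply: (ae_separated_const (v := fun y => l * (b y * psi y / psi (t y)))).
  apply: filterS2 (filterI Bb Bsplit) Bsplit_t => p [E0 E1] /= E2.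
  rewrite /u (_ : b p.1 = b p.2 * (l * B p / B (t p.1, t p.2))); last first.
    by rewrite -E0; field.
  by rewrite E1 E2; field; rewrite c0 !phi0 !psi0.
have [x0 ubex0] := ae_exists ube.
exists beta; split.
  rewrite -ubex0 /u.
  by repeat (apply: circleM || apply: circleV || exact: b1 || exact: phi1).
by apply: filterS ube => x <-; rewrite /u; field; rewrite !phi0.
Qed.

Lemma group_cohomologous2_of_twist {c1 c2 : seq G -> R[i]}
    {b : seq G -> X -> R[i]} {beta : G -> R[i]} {phi : X -> R[i]} :
  (forall g, circle (beta g)) -> (forall x, phi x != 0) ->
  (forall g, size g = 2 ->
     {ae nu, forall x, c1 g * act_coboundary act 1 b g x = c2 g}) ->
  (forall g, {ae nu, forall x,
     b [:: g] x = beta g * phi x / phi (act g^-1%g x)}) ->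
  group_cohomologous 2 c1 c2.
Proof.
move=> beta1 phi0 Hb tw; have beta0 g := circle_neq0 (beta1 g).
have [_ actM _ _] := pmp.
exists (fun s => beta (head 1%g s)); split; first by case=> [|a [|]] //= _.
case=> [|g [|h [|]]] //= _; rewrite coboundary1 /=.
have twh := ae_measure_preserving (mp_action_measure_preserving pmp g^-1%g) (tw h).
have [x [Hx [Eg [Egh Eh]]]] :=
  ae_exists (filterI (Hb [:: g; h] erefl) (filterI (tw g) (filterI (tw (g * h)%g) twh))).
move: Hx; rewrite act_coboundary1 Eg Egh Eh invgM actM => <-.
by field; rewrite !phi0 !beta0.
Qed.

Lemma cohomologous_const_of_coboundary_const {b : G -> X -> R[i]}
    {k : G -> G -> R[i]} :
  weakly_mixing nu2 (diag_action act) -> Tcocycle_superrigid nu2 (diag_action act) ->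
  (forall g, measurable_T (b g)) -> (forall g h, k g h != 0) ->
  (forall g h, {ae nu, forall x,
     b h (act g^-1%g x) / b (g * h)%g x * b g x = k g h}) ->
  exists beta phi, [/\ forall g, circle (beta g), measurable_T phi &
    forall g, {ae nu, forall x, b g x = beta g * phi x / phi (act g^-1%g x)}].
Proof.
move=> wm2 [_ _ superrigid] mb k0 bk.
have b0 g x : b g x != 0 := circle_neq0 ((mb g).1 x).
have mratio g : measurable_T (diag_ratio b g).
  apply: measurable_TM; first exact: measurable_T_comp measurable_fst (mb g).
  by apply: measurable_TV; exact: measurable_T_comp measurable_snd (mb g).
have [lam [lam1 _ [B [mB HB]]]] :=
  superrigid _ mratio (diag_ratio_cocycle b0 k0 bk).
have lam0 g : lam g != 0 := circle_neq0 (lam1 g).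
have B0 p : B p != 0 := circle_neq0 (mB.1 p).
have Bg g : {ae nu2, forall p, B (diag_action act g p) =
    lam g^-1%g * (b g^-1%g p.1)^-1 * b g^-1%g p.2 * B p}.
  apply: filterS (HB g^-1%g) => p; rewrite invgK /diag_ratio => Eg.
  rewrite (_ : b _ p.1 = b g^-1%g p.2 * (lam g^-1%g * B p / B (diag_action act g p))).
    by field; rewrite !B0 lam0 b0.
  by rewrite -Eg; field.
have [c [phi [psi [c1 mphi mpsi Bsplit]]]] := weakly_mixing2_multiplier_split
  (l := fun g => lam g^-1%g) (f := fun g x => (b g^-1%g x)^-1)
  (h := fun g x => b g^-1%g x) wm2 mB (fun g => lam0 _)
  (fun g x => invr_neq0 (b0 _ _)) (fun g x => b0 _ _) Bg.
have twist g : exists beta, circle beta /\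
    {ae nu, forall x, b g x = beta * phi x / phi (act g^-1%g x)}.
  apply: (diag_ratio_split_coboundary (mp_action_measure_preserving pmp g^-1%g)
    (mb g).1 mphi.1 (fun y => circle_neq0 (mpsi.1 y)) (circle_neq0 c1) (lam0 g) Bsplit).
  exact: HB g.
have [beta betaP] := choice twist.
by exists beta, phi; split=> // g; have [] := betaP g.
Qed.

Lemma Psi2_injective (c1 c2 : seq G -> R[i]) :
  weakly_mixing nu2 (diag_action act) -> Tcocycle_superrigid nu2 (diag_action act) ->
  group_cochain 2 c1 -> group_cochain 2 c2 ->
  act_cohomologous nu act 2 (Psi X c1) (Psi X c2) -> group_cohomologous 2 c1 c2.
Proof.
move=> wm2 superrigid cc1 cc2 [b [mb Hb]].
have c0 (c : seq G -> R[i]) g h : group_cochain 2 c -> c [:: g; h] != 0.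
  by move=> cc; apply: circle_neq0; exact: cc.
have b0 g x : b [:: g] x != 0 := circle_neq0 ((mb [:: g] erefl).1 x).
have cob g h : {ae nu, forall x, b [:: h] (act g^-1%g x) / b [:: g * h]%g x *
    b [:: g] x = c2 [:: g; h] / c1 [:: g; h]}.
  apply: filterS (Hb [:: g; h] erefl) => x; rewrite act_coboundary1 /Psi => <-.
  by field; rewrite c0 // b0.
have [beta [phi [beta1 mphi twist]]] :=
  cohomologous_const_of_coboundary_const (b := fun g => b [:: g]) wm2 superrigid
  (fun g => mb [:: g] erefl)
  (fun g h => mulf_neq0 (c0 _ g h cc2) (invr_neq0 (c0 _ g h cc1))) cob.
exact: (group_cohomologous2_of_twist beta1 (fun x => circle_neq0 (mphi.1 x)) Hb twist).
Qed.

End Psi2_injectivity.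
Arguments Psi2_injective {G} countG {R d X nu act} pmp {c1 c2}.

Theorem lemma2 (G : groupType) (countG : countable [set: G])
    (d : measure_display) (X : measurableType d) (R : realType)
    (nu : probability X R) (stdX : standard_borel X R)
    (act : G -> X -> X) (pmp : mp_action nu act) :
  (forall n : nat,
     (forall c, group_cocycle n c -> act_cocycle nu act n (Psi X c)) /\
     (forall c1 c2, group_cocycle n c1 -> group_cocycle n c2 ->
        group_cohomologous n c1 c2 ->
        act_cohomologous nu act n (Psi X c1) (Psi X c2)) /\
     (forall c1 c2, group_cocycle n c1 -> group_cocycle n c2 ->
        act_cohomologous nu act n (Psi X (fun g => c1 g * c2 g))
          (fun g x => Psi X c1 g x * Psi X c2 g x))) /\
  (weakly_mixing nu act ->
     forall c1 c2, group_cocycle 1 c1 -> group_cocycle 1 c2 ->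
       act_cohomologous nu act 1 (Psi X c1) (Psi X c2) ->
       group_cohomologous 1 c1 c2) /\
  (weakly_mixing (nu \x nu)%E (diag_action act) ->
   Tcocycle_superrigid (nu \x nu)%E (diag_action act) ->
     forall c1 c2, group_cocycle 2 c1 -> group_cocycle 2 c2 ->
       act_cohomologous nu act 2 (Psi X c1) (Psi X c2) ->
       group_cohomologous 2 c1 c2).
Proof.
split=> [n|].
  split; first exact: act_cocycle_Psi.
  by split=> c1 c2 _ _; [exact: act_cohomologous_Psi|exact: act_cohomologous_refl].
split=> [wm c1 c2 [cc1 _] [cc2 _]|wm2 superrigid c1 c2 [cc1 _] [cc2 _]].
- exact: (Psi1_injective countG pmp wm cc1 cc2).
- exact: (Psi2_injective countG pmp wm2 superrigid cc1 cc2).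
Qed.
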